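(* Let $n,m\ge1$, $r>0$, and let $\mathbf b_1,\dots,\mathbf b_m\in[0,\infty)^n$ be nonzero vectors. Put $D_{ij}=\frac{r}{m}(\mathbf b_i\cdot\mathbf b_j)$ and $\overline D=\max_{i,j}D_{ij}$. Define $\alpha^{(t)}\in\mathbb{R}^m$, $t\ge0$, by $\alpha^{(0)}_k=\sqrt{1/(\overline D m)}$ for all $k$, and, given $\alpha^{(t)}$: let $E_i^{(t)}=\sum_{j=1}^m D_{ij}\alpha^{(t)}_i\alpha^{(t)}_j-1$, choose $k=k_t$ with $|E^{(t)}_k|=\max_i|E^{(t)}_i|$, set $\alpha^{(t+1)}_i=\alpha^{(t)}_i$ for $i\neq k$ and $\alpha^{(t+1)}_k=\frac{-s+\sqrt{s^2+4D_{kk}}}{2D_{kk}}$ with $s=\sum_{i\ne k}D_{ik}\alpha^{(t)}_i$. Let $E^{(t)}=\sum_{i=1}^m|E^{(t)}_i|$. Then the sequence $(E^{(t)})_{t\ge0}$ is decreasing: $E^{(t+1)}\le E^{(t)}$ for all $t\ge0$. *)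

From HB Require Import structures.
From mathcomp Require Import all_boot all_order all_algebra.
From mathcomp Require Import reals.
Set Implicit Arguments. Unset Strict Implicit. Unset Printing Implicit Defensive.
Import Order.TTheory GRing.Theory Num.Theory.
Local Open Scope ring_scope.

Section Defs.
Variables (R : realType) (n m : nat).

Definition Dmat (r : R) (b : 'I_m -> 'rV[R]_n) (i j : 'I_m) : R :=
  r / m%:R * (\sum_(l < n) b i 0 l * b j 0 l).

(* Dbar = max_{i,j} D_{ij}; folded with neutral element 0, which is harmless
   since all D_{ij} >= 0 (nonnegative vectors) and m >= 1. *)
Definition Dbar (D : 'I_m -> 'I_m -> R) : R :=
  \big[Num.max/0]_(i < m) \big[Num.max/0]_(j < m) D i j.

Definition alpha0 (D : 'I_m -> 'I_m -> R) : 'I_m -> R :=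
  fun _ => Num.sqrt (1 / (Dbar D * m%:R)).

Definition Eerr (D : 'I_m -> 'I_m -> R) (a : 'I_m -> R) (i : 'I_m) : R :=
  \sum_(j < m) D i j * a i * a j - 1.

Definition Etot (D : 'I_m -> 'I_m -> R) (a : 'I_m -> R) : R :=
  \sum_(i < m) `|Eerr D a i|.

Definition update (D : 'I_m -> 'I_m -> R) (a : 'I_m -> R) (k : 'I_m) : 'I_m -> R :=
  let s := \sum_(i < m | i != k) D i k * a i in
  fun i => if i == k then (- s + Num.sqrt (s ^+ 2 + 4 * D k k)) / (2 * D k k)
           else a i.

(* the iterates, given the sequence of chosen indices ks t = k_t *)
Fixpoint alpha (D : 'I_m -> 'I_m -> R) (ks : nat -> 'I_m) (t : nat) : 'I_m -> R :=
  match t with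
  | 0 => alpha0 D
  | t'.+1 => update D (alpha D ks t') (ks t')
  end.

End Defs.

From HB Require Import structures.
From mathcomp Require Import all_boot all_order all_algebra.
From mathcomp Require Import reals.
From mathcomp Require Import ring lra.
Set Implicit Arguments. Unset Strict Implicit. Unset Printing Implicit Defensive.
Import Order.TTheory GRing.Theory Num.Theory.
Local Open Scope ring_scope.

(* Updating coordinate k solves E_k = 0 exactly.  Every other E_i moves by
   D_ik a_i (x - a_k), where x is the new value of a_k, so the other errors
   grow in total by at most s |x - a_k| with s = sum_(i != k) D_ik a_i.  But
   the old error factors as E_k = (a_k - x)(D_kk (a_k + x) + s), and with all
   entries nonnegative |E_k| >= s |a_k - x|, which pays for that growth. *)

Section PositiveQuadRoot.
Variables (R : rcfType) (d s : R).
Hypothesis d_gt0 : 0 < d.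

Definition pos_quad_root : R := (- s + Num.sqrt (s ^+ 2 + 4 * d)) / (2 * d).

Let sqrt_sqr : Num.sqrt (s ^+ 2 + 4 * d) ^+ 2 = s ^+ 2 + 4 * d.
Proof. by rewrite sqr_sqrtr // addr_ge0 ?sqr_ge0 // mulr_ge0 // ltW. Qed.

Lemma pos_quad_root_ge0 : 0 <= pos_quad_root.
Proof.
apply: divr_ge0; last by rewrite mulr_ge0 // ltW.
have d4_ge0 : 0 <= 4 * d by rewrite mulr_ge0 // ltW.
rewrite addrC subr_ge0; apply: le_trans (ler_norm s) _.
by rewrite -sqrtr_sqr ler_sqrt ?lerDl ?addr_ge0 ?sqr_ge0.
Qed.

Lemma pos_quad_rootE : d * pos_quad_root ^+ 2 + s * pos_quad_root = 1.
Proof.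
have d_neq0 : d != 0 by rewrite gt_eqF.
rewrite /pos_quad_root; set q := Num.sqrt _.
have -> : d * ((- s + q) / (2 * d)) ^+ 2 + s * ((- s + q) / (2 * d))
          = (q ^+ 2 - s ^+ 2) / (4 * d) by field.
by rewrite sqrt_sqr addrAC subrr add0r divff // mulf_neq0 // pnatr_eq0.
Qed.

End PositiveQuadRoot.

Section CoordinateUpdate.
Variables (R : realType) (m : nat) (D : 'I_m -> 'I_m -> R).
Hypothesis D_sym : forall i j, D i j = D j i.
Hypothesis D_ge0 : forall i j, 0 <= D i j.

Definition off_diag_sum (a : 'I_m -> R) (k : 'I_m) : R :=
  \sum_(i < m | i != k) D i k * a i.

Lemma update_at a k : update D a k k = pos_quad_root (D k k) (off_diag_sum a k).
Proof. by rewrite /update eqxx. Qed.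

Lemma update_ne a k i : i != k -> update D a k i = a i.
Proof. by move=> /negbTE ik; rewrite /update ik. Qed.

Lemma update_ge0 a k : 0 < D k k -> (forall i, 0 <= a i) ->
  forall i, 0 <= update D a k i.
Proof.
move=> Dkk_gt0 a_ge0 i; have [-> | ik] := eqVneq i k.
  by rewrite update_at pos_quad_root_ge0.
by rewrite update_ne.
Qed.

Lemma Eerr_bigD1 a k i :
  Eerr D a i = D i k * a i * a k + \sum_(j < m | j != k) D i j * a i * a j - 1.
Proof. by rewrite /Eerr (bigD1 k). Qed.

Lemma Eerr_off_diag a k :
  Eerr D a k = D k k * a k ^+ 2 + a k * off_diag_sum a k - 1.
Proof.
rewrite (Eerr_bigD1 _ k) /off_diag_sum mulr_sumr.
rewrite (eq_bigr (fun j => a k * (D j k * a j))); last by move=> j _; rewrite D_sym; ring.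
ring.
Qed.

Section AtCoordinate.
Variables (a : 'I_m -> R) (k : 'I_m).
Hypothesis Dkk_gt0 : 0 < D k k.

Let x := update D a k k.

Lemma off_diag_sum_update : off_diag_sum (update D a k) k = off_diag_sum a k.
Proof. by apply: eq_bigr => i ik; rewrite update_ne. Qed.

Lemma Eerr_update_at : Eerr D (update D a k) k = 0.
Proof.
rewrite Eerr_off_diag off_diag_sum_update update_at [pos_quad_root _ _ * _]mulrC.
by rewrite pos_quad_rootE // subrr.
Qed.

Lemma Eerr_update_ne i : i != k ->
  Eerr D (update D a k) i = Eerr D a i + D i k * a i * (x - a k).
Proof.
move=> ik; rewrite !(Eerr_bigD1 _ k) (update_ne _ ik).
rewrite (eq_bigr (fun j => D i j * a i * a j)); last by move=> j jk; rewrite !update_ne.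
rewrite /x; ring.
Qed.

Lemma Eerr_factor :
  Eerr D a k = (a k - x) * (D k k * (a k + x) + off_diag_sum a k).
Proof.
rewrite Eerr_off_diag -[in LHS](pos_quad_rootE (off_diag_sum a k) Dkk_gt0).
by rewrite -update_at -/x; ring.
Qed.

Lemma Etot_update_le : (forall i, 0 <= a i) -> Etot D (update D a k) <= Etot D a.
Proof.
move=> a_ge0; set s := off_diag_sum a k.
have x_ge0 : 0 <= x by rewrite /x update_at pos_quad_root_ge0.
have s_ge0 : 0 <= s by apply: sumr_ge0 => i _; rewrite mulr_ge0.
have others_le : \sum_(i < m | i != k) `|Eerr D (update D a k) i|
    <= \sum_(i < m | i != k) `|Eerr D a i| + s * `|x - a k|.
  rewrite /s /off_diag_sum mulr_suml -big_split /=.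
  apply: ler_sum => i ik; rewrite Eerr_update_ne //.
  apply: le_trans (ler_normD _ _) _.
  by rewrite normrM (ger0_norm (mulr_ge0 (D_ge0 _ _) (a_ge0 _))).
have Ek_ge : s * `|x - a k| <= `|Eerr D a k|.
  rewrite Eerr_factor -/s normrM distrC mulrC.
  rewrite [X in _ <= _ * X]ger0_norm; last by rewrite addr_ge0 // mulr_ge0 // addr_ge0.
  by rewrite ler_wpM2l // lerDr mulr_ge0 // ?addr_ge0 // ltW.
rewrite /Etot (bigD1 k) //= [X in _ <= X](bigD1 k) //= Eerr_update_at normr0 add0r.
lra.
Qed.

End AtCoordinate.

End CoordinateUpdate.

Section GramMatrix.
Variables (R : realType) (n m : nat) (r : R) (b : 'I_m -> 'rV[R]_n).
Hypotheses (m_gt0 : (0 < m)%N) (r_gt0 : 0 < r) (b_ge0 : forall i l, 0 <= b i 0 l).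

Lemma Dmat_sym i j : Dmat r b i j = Dmat r b j i.
Proof. by rewrite /Dmat; congr (_ * _); apply: eq_bigr => l _; rewrite mulrC. Qed.

Let rm_gt0 : 0 < r / m%:R.
Proof. by rewrite divr_gt0 // ltr0n. Qed.

Lemma Dmat_ge0 i j : 0 <= Dmat r b i j.
Proof.
by apply: mulr_ge0; [exact: ltW | apply: sumr_ge0 => l _; exact: mulr_ge0].
Qed.

Lemma Dmat_diag_gt0 k : b k != 0 -> 0 < Dmat r b k k.
Proof.
move=> bk_neq0; have [l bkl_neq0] : exists l, b k 0 l != 0.
  apply/existsP; apply: contraNT bk_neq0; rewrite negb_exists => /forallP b0.
  by apply/eqP/rowP => l; rewrite !mxE; apply/eqP; rewrite -[_ == _]negbK b0.
have bkl_gt0 : 0 < b k 0 l * b k 0 l by rewrite mulr_gt0 // lt_def bkl_neq0 b_ge0.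
rewrite /Dmat mulr_gt0 // (bigD1 l) //= ltr_pwDl //.
by rewrite sumr_ge0 // => i _; rewrite mulr_ge0.
Qed.

End GramMatrix.

Lemma alpha_ge0 (R : realType) (m : nat) (D : 'I_m -> 'I_m -> R) ks :
  (forall k, 0 < D k k) -> forall t i, 0 <= alpha D ks t i.
Proof.
move=> Dkk_gt0; elim=> [|t IH] i /=; first exact: sqrtr_ge0.
exact: update_ge0.
Qed.

Theorem lemma3 (R : realType) (n m : nat) (r : R) (b : 'I_m -> 'rV[R]_n)
    (ks : nat -> 'I_m) :
  (0 < n)%N -> (0 < m)%N -> 0 < r ->
  (forall i l, 0 <= b i 0 l) ->
  (forall i, b i != 0) ->
  (forall t i, `|Eerr (Dmat r b) (alpha (Dmat r b) ks t) i|
               <= `|Eerr (Dmat r b) (alpha (Dmat r b) ks t) (ks t)|) ->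
  forall t : nat,
    Etot (Dmat r b) (alpha (Dmat r b) ks t.+1)
      <= Etot (Dmat r b) (alpha (Dmat r b) ks t).
Proof.
move=> _ m_gt0 r_gt0 b_ge0 b_neq0 _ t.
have Dkk_gt0 k : 0 < Dmat r b k k by exact: Dmat_diag_gt0.
apply: Etot_update_le => //; [exact: Dmat_sym | exact: Dmat_ge0 | exact: alpha_ge0].
Qed.
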